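(* Let $q$ be a power of the prime $p$ and let $\mathcal{G}$ be a subgroup of $(\mathbb{F}_q,+)$ of order $p$. If there exists a $\mathcal{G}$-fixed c-Wieferich prime in $\mathbb{F}_q[T]$ of degree $p$, then every $\mathcal{G}$-fixed monic irreducible polynomial in $\mathbb{F}_q[T]$ of degree $p$ is a c-Wieferich prime in $\mathbb{F}_{q^r}[T]$ for at least one $r\in\{1,\ldots,p-1\}$.
   Context: For a prime power $Q$, the Carlitz module over $\mathbb{F}_Q[T]$: $\rho_N(X)$ for $N\in\mathbb{F}_Q[T]$ is the additive polynomial determined by requiring $N\mapsto\rho_N$ to be an $\mathbb{F}_Q$-algebra homomorphism into additive polynomials (multiplication = composition) with $\rho_T(X)=X^Q+TX$. A monic irreducible $\mathcal{P}\in\mathbb{F}_Q[T]$ is a c-Wieferich prime in $\mathbb{F}_Q[T]$ if $\rho_{\mathcal{P}-1}(1)\equiv0\pmod{\mathcal{P}^2}$. A polynomial $f$ is $\mathcal{G}$-fixed if $f(T+a)=f(T)$ for all $a\in\mathcal{G}$. *)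

From HB Require Import structures.
From mathcomp Require Import all_boot all_order all_algebra all_field.
Set Implicit Arguments. Unset Strict Implicit. Unset Printing Implicit Defensive.
Import GRing.Theory.
Local Open Scope ring_scope.

(* Carlitz module over F_Q[T], Q = #|L| (L a finite field, T = 'X).
   rho_T(b) = b^Q + T b, and for N = sum_i N_i T^i,
   rho_N(a) = sum_i N_i * (rho_T)^i (a)  (the evaluation at a of the
   additive polynomial rho_N determined by the F_Q-algebra homomorphism
   N |-> rho_N with multiplication = composition). *)
Definition carlitzT (L : finFieldType) (b : {poly L}) : {poly L} :=
  b ^+ #|L| + 'X * b.

Definition carlitz (L : finFieldType) (N a : {poly L}) : {poly L} :=
  \sum_(i < size N) (N`_i)%:P * iter (nat_of_ord i) (@carlitzT L) a.

Definition cWieferich (L : finFieldType) (P : {poly L}) : Prop :=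
  [/\ P \is monic, irreducible_poly P & P ^+ 2 %| carlitz (P - 1) 1].

Definition add_subgroup (F : finFieldType) (G : {set F}) : Prop :=
  0 \in G /\ (forall x y, x \in G -> y \in G -> x - y \in G).

Definition Gfixed (F : finFieldType) (G : {set F}) (f : {poly F}) : Prop :=
  forall a, a \in G -> f \Po ('X + a%:P) = f.

(* Let Q = #|F|. The roots of a G-fixed monic irreducible P of degree p
   are invariant under translation by G, hence form a progression
   z + F_p g with 0 != g in G. Frobenius permutes them, so z^Q = z + a for
   some nonzero a in G: P divides X^Q - X - a, and then
   P = (X - z)^p - a^(p-1) (X - z) over an algebraic closure.
   Since rho_T(b) = b^Q + T b and b(z)^Q = b(z + a), the values at z of
   rho_(T^i)(1) and of its derivative are those of polynomials U_i, V_i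
   depending only on a. Evaluating rho_(P-1)(1) and its derivative at the
   simple root z, P is c-Wieferich iff U_p(0) = 1 + a^(p-1) and
   V_p(0) = a^(p-1), a condition on a alone.
   The element a_W attached to the c-Wieferich W is r a_P with 0 < r < p.
   Over a field with Q^r elements, P divides X^(Q^r) - X - r a_P, hence is
   still irreducible with attached element a_W, and satisfies the criterion
   because W does. *)

From HB Require Import structures.
From mathcomp Require Import all_boot all_order all_algebra all_solvable all_field.
From mathcomp Require Import ring.
Import GRing.Theory.
Local Open Scope ring_scope.
Set Implicit Arguments. Unset Strict Implicit. Unset Printing Implicit Defensive.

Lemma natr_inj_pchar (R : nzRingType) p i j : p \in [pchar R] ->
  (i < p)%N -> (j < p)%N -> (i%:R : R) = j%:R -> i = j.
Proof.
move=> pR; wlog le_ij : i j / (i <= j)%N => [IH ip jp ij|_ jp ij].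
  by case/orP: (leq_total i j) => /IH; [apply | move/(_ jp ip (esym ij))].
apply/eqP; rewrite eqn_leq le_ij -subn_eq0.
have : (p %| j - i)%N by rewrite (dvdn_pcharf pR) natrB // ij subrr.
by rewrite /dvdn modn_small // (leq_ltn_trans (leq_subr _ _)).
Qed.

Lemma deriv_XaddC (R : nzRingType) (c : R) : ('X + c%:P)^`() = 1.
Proof. by rewrite derivD derivX derivC addr0. Qed.

Lemma deriv_eq0_pchar (K : idomainType) p (q : {poly K}) :
  p \in [pchar K] -> q^`() = 0 -> (size q <= p.+1)%N ->
  q = (q`_p)%:P * 'X^p + (q`_0)%:P.
Proof.
move=> pK dq sq; have p_gt0 := prime_gt0 (pcharf_prime pK).
apply/polyP => i; rewrite coefD coefCM coefXn coefC mulr_natr.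
have [->|i0] := eqVneq i 0%N; first by rewrite ltn_eqF // mulr0n add0r.
rewrite addr0; case: ltngtP => [i_lt_p|p_lt_i|->] //; rewrite mulr0n.
  apply/eqP; have := coef_deriv q i.-1; rewrite dq coef0 prednK ?lt0n // => /esym/eqP.
  by rewrite -mulr_natr mulf_eq0 -(dvdn_pcharf pK) gtnNdvd ?lt0n // orbF.
by rewrite nth_default // (leq_trans sq).
Qed.

Section Trinomial.
Variables (R : comNzRingType) (n : nat) (c d : R).
Hypothesis n_gt1 : (1 < n)%N.

Let low_size : (size (c%:P * 'X + d%:P)%R < n.+1)%N.
Proof.
rewrite size_MXaddC; case: ifP => // _.
by rewrite ltnS (leq_ltn_trans (size_polyC_leq1 c)).
Qed.

Lemma size_trinomial : size ('X^n + c%:P * 'X + d%:P) = n.+1.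
Proof. by rewrite -addrA size_polyDl size_polyXn ?low_size. Qed.

Lemma monic_trinomial : 'X^n + c%:P * 'X + d%:P \is monic.
Proof. by rewrite -addrA monicE lead_coefDl ?size_polyXn ?low_size ?lead_coefXn. Qed.

Lemma sum_coef_trinomial (F : nat -> {poly R}) :
  \sum_(i < size ('X^n + c%:P * 'X + d%:P))
      (('X^n + c%:P * 'X + d%:P)`_i)%:P * F i = F n + c%:P * F 1%N + d%:P * F 0%N.
Proof.
rewrite size_trinomial; case: n n_gt1 => [|[|m]] // _.
have coefT (i : nat) : ('X^(m.+2) + c%:P * 'X + d%:P)`_i =
    (i == m.+2)%:R + c *+ (i == 1%N) + d *+ (i == 0%N).
  by rewrite !coefD coefXn coefCM coefX coefC mulr_natr !mulrb.
rewrite big_ord_recr !big_ord_recl big1 => [|i _]; last first.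
  have -> : widen_ord (leqnSn m.+2) (lift ord0 (lift ord0 i)) = i.+2 :> nat by [].
  by rewrite coefT !eqSS (ltn_eqF (ltn_ord i)) !mulr0n !addr0 mul0r.
rewrite !coefT /= eqxx !addr0 !add0r mul1r !mulr1n -[bump 0 0]/1%N; ring.
Qed.

End Trinomial.

Lemma deriv_trinomial_pchar (R : comNzRingType) p (c d : R) :
  p \in [pchar R] -> ('X^p + c%:P * 'X + d%:P)^`() = c%:P.
Proof.
move=> pR; rewrite !derivE (mulrn_pchar (R := {poly R})) ?pchar_poly //.
by rewrite mulr1 add0r addr0.
Qed.

Section SimpleRoot.
Variables (L K : fieldType) (e : {rmorphism L -> K}) (P : {poly L}) (z : K).
Hypotheses (irrP : irreducible_poly P) (rP : root (map_poly e P) z).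

Lemma irreducible_dvdp_root q : root (map_poly e q) z -> P %| q.
Proof.
move=> rq; have gP : gcdp P q %| P := dvdp_gcdl P q.
have rg : root (map_poly e (gcdp P q)) z by rewrite gcdp_map root_gcd rP rq.
have [/eqP/size_poly1P[a a0 ga]|s1] := eqVneq (size (gcdp P q)) 1%N.
  by move: rg; rewrite ga map_polyC rootC fmorph_eq0 (negPf a0).
by rewrite -(eqp_dvdl _ (irrP _ s1 gP)) dvdp_gcdr.
Qed.

Lemma sqr_dvdp_double_root q : (map_poly e P)^`().[z] != 0 ->
  (P ^+ 2 %| q) = root (map_poly e q) z && root (map_poly e q)^`() z.
Proof.
move=> dP; apply/idP/andP => [/dvdpP[k ->] | [rq rdq]].
  rewrite rmorphM rmorphXn /= derivM deriv_exp /root !hornerE (eqP rP).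
  by rewrite !expr0n /= !(mulr0, mul0r, addr0).
have /dvdpP[k qE] := irreducible_dvdp_root rq.
have /dvdpP[k2 kE] : P %| k.
  apply: irreducible_dvdp_root; move: rdq.
  rewrite qE rmorphM /= derivM /root !hornerE (eqP rP) mulr0 add0r.
  by rewrite mulf_eq0 (negPf dP) orbF.
by apply/dvdpP; exists k2; rewrite qE kE expr2 mulrA.
Qed.

End SimpleRoot.

Definition artin_schreier (R : nzRingType) (n : nat) (a : R) : {poly R} :=
  'X^n - 'X - a%:P.

Lemma map_artin_schreier (R S : nzRingType) (f : {rmorphism R -> S}) n a :
  map_poly f (artin_schreier n a) = artin_schreier n (f a).
Proof. by rewrite !rmorphB /= map_polyXn map_polyX map_polyC. Qed.

Lemma root_artin_schreier (R : comNzRingType) n (a y : R) :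
  root (artin_schreier n a) y = (y ^+ n == y + a).
Proof. by rewrite /root !hornerE subr_eq0 subr_eq addrC. Qed.

Lemma root_dvdp_artin_schreier (L K : fieldType) (e : {rmorphism L -> K})
    (P : {poly L}) n a y :
  P %| artin_schreier n a -> root (map_poly e P) y -> y ^+ n = y + e a.
Proof.
rewrite -(dvdp_map e) map_artin_schreier => /root_dvdp/[apply].
by rewrite root_artin_schreier => /eqP.
Qed.

Section Frobenius.
Variables (K : fieldType) (n : nat).
Hypothesis nK : [pchar K].-nat n.

Let n_gt0 : (0 < n)%N. Proof. by case/andP: nK. Qed.

Lemma natr_exp_pchar j : (j%:R : K) ^+ n = j%:R.
Proof.
elim: j => [|j IH]; first by rewrite expr0n eqn0Ngt n_gt0.
by rewrite -natr1 exprDn_pchar // IH expr1n.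
Qed.

Lemma horner_exp_pchar (q : {poly K}) z :
  (forall i, q`_i ^+ n = q`_i) -> q.[z] ^+ n = q.[z ^+ n].
Proof.
elim/poly_ind: q => [|q c IH] qn; first by rewrite !horner0 expr0n eqn0Ngt n_gt0.
have := qn 0%N; rewrite coefD coefMX coefC /= add0r => cn.
rewrite !hornerMXaddC exprDn_pchar // exprMn cn IH // => i.
by have := qn i.+1; rewrite coefD coefMX coefC addr0.
Qed.

Lemma dvdp_artin_schreier_exp (a : K) r : a ^+ n = a ->
  artin_schreier n a %| artin_schreier (n ^ r) (a *+ r).
Proof.
(* [artin_schreier (n ^ r) (a *+ r)] telescopes into the sum of the
   [n ^ j]-th powers of [artin_schreier n a], j < r. *)
move=> an; have nKX : [pchar {poly K}].-nat n by rewrite (eq_pnat _ (@pchar_poly K)).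
have powE j : artin_schreier n a ^+ (n ^ j)%N = 'X^(n ^ j.+1) - 'X^(n ^ j) - a%:P.
  have nj : [pchar {poly K}].-nat (n ^ j)%N by rewrite pnatX nKX.
  have a_nj : a ^+ (n ^ j)%N = a by elim: j {nj} => // j IH; rewrite expnSr exprM IH.
  by rewrite !exprDn_pchar // !exprNn_pchar // -exprM -expnS -polyC_exp a_nj.
have -> : artin_schreier (n ^ r) (a *+ r) =
    \sum_(0 <= j < r) artin_schreier n a ^+ (n ^ j)%N.
  rewrite (eq_bigr _ (fun j _ => powE j)) sumrB telescope_sumr // expn0 expr1.
  by rewrite sumr_const_nat subn0 -polyCMn.
elim/big_rec: _ => [|j q _ dq]; first exact: dvdp0.
by rewrite dvdp_add // dvdp_exp ?expn_gt0 ?n_gt0.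
Qed.

End Frobenius.

Lemma pchar_nat_card (L : finFieldType) (R : nzRingType) (f : {rmorphism L -> R}) :
  [pchar R].-nat #|L|.
Proof.
have [p _ pL] := finPcharP L.
rewrite (eq_pnat _ (pcharf_eq (rmorph_pchar f pL))) -cardsT -pgroupE.
exact/abelem_pgroup/fin_ring_pchar_abelem.
Qed.

Lemma natr_card_finField (L : finFieldType) : (#|L|%:R : L) = 0.
Proof.
apply/eqP; apply: contraT; rewrite natf_neq0_pchar => /(pnat_1 (pchar_nat_card idfun)).
by move/eqP; rewrite gtn_eqF ?finNzRing_gt1.
Qed.

Lemma root_map_frobenius (L : finFieldType) (K : fieldType) (e : {rmorphism L -> K})
    (q : {poly L}) y :
  root (map_poly e q) y -> root (map_poly e q) (y ^+ #|L|).
Proof.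
have Lpchar := pchar_nat_card e.
rewrite /root -(horner_exp_pchar Lpchar) => [/eqP->|i]; last first.
  by rewrite coef_map -rmorphXn expf_card.
by rewrite expr0n eqn0Ngt; case/andP: Lpchar => ->.
Qed.

Definition progression (R : nzRingType) (z g : R) n := mkseq (fun j => z + j%:R * g) n.

Lemma progression_roots (R : comNzRingType) (q : {poly R}) z g n :
  root q z -> (forall y, root q y -> root q (y + g)) ->
  all (root q) (progression z g n).
Proof.
move=> qz qg; apply/allP => _ /mapP[j _ ->].
by elim: j => [|j IH]; rewrite ?mul0r ?addr0 // -natr1 mulrDl mul1r addrA qg.
Qed.

Section Progression.
Variables (K : fieldType) (p : nat) (z g : K).
Hypotheses (pK : p \in [pchar K]) (g0 : g != 0).

Lemma uniq_progression : uniq (progression z g p).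
Proof.
rewrite map_inj_in_uniq ?iota_uniq // => i j; rewrite !mem_iota !add0n => ip jp.
by move/addrI/(mulIf g0)/(natr_inj_pchar pK ip jp).
Qed.

Lemma prod_progression : \prod_(y <- progression z g p) ('X - y%:P) =
  'X^p + (- g ^+ p.-1)%:P * 'X + (g ^+ p.-1 * z - z ^+ p)%:P.
Proof.
have p_gt1 := prime_gt1 (pcharf_prime pK).
have pnat_p : [pchar K].-nat p.
  by rewrite (eq_pnat _ (pcharf_eq pK)) pnat_id ?(pcharf_prime pK).
set T := RHS; have sT : size T = (size (progression z g p)).+1.
  by rewrite size_trinomial // size_mkseq.
have rT : all (root T) (progression z g p).
  apply/allP => _ /mapP[j _ ->].
  rewrite /root !(hornerD, hornerM, hornerC, hornerX, hornerXn).
  rewrite exprDn_pchar // exprMn natr_exp_pchar // -[in g ^+ p](prednK (ltnW p_gt1)).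
  by rewrite exprSr; move: (z ^+ p) (g ^+ p.-1) => zp c; apply/eqP; ring.
rewrite [in RHS](all_roots_prod_XsubC sT rT) ?uniq_rootsE ?uniq_progression //.
by rewrite (monicP (monic_trinomial _ _ p_gt1)) scale1r.
Qed.

End Progression.

Section RootOrbit.
Variables (L K : fieldType) (e : {rmorphism L -> K}) (p : nat) (P : {poly L}) (z g : K).
Hypotheses (pK : p \in [pchar K]) (g0 : g != 0) (mP : P \is monic) (sP : size P = p.+1).
Hypotheses (rz : root (map_poly e P) z)
  (rg : forall y, root (map_poly e P) y -> root (map_poly e P) (y + g)).

Lemma map_poly_progression :
  map_poly e P = \prod_(y <- progression z g p) ('X - y%:P).
Proof.
have sPe : size (map_poly e P) = (size (progression z g p)).+1.
  by rewrite size_map_poly sP size_mkseq.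
rewrite {1}(all_roots_prod_XsubC sPe (progression_roots _ rz rg)).
  by rewrite (monicP _) ?map_monic ?scale1r.
by rewrite uniq_rootsE uniq_progression.
Qed.

Lemma root_map_poly_progression y :
  root (map_poly e P) y = (y \in progression z g p).
Proof. by rewrite map_poly_progression root_prod_XsubC. Qed.

End RootOrbit.

Lemma irreducible_dvdp_artin_schreier (L : finFieldType) p (P : {poly L}) (a : L) :
  p \in [pchar L] -> size P = p.+1 -> a != 0 -> P %| artin_schreier #|L| a ->
  irreducible_poly P.
Proof.
move=> pL sP a0 PAS; have [K [e _]] := countable_algebraic_closure L.
have pK := rmorph_pchar e pL; have ea0 : e a != 0 by rewrite fmorph_eq0.
split=> [|d sd dP]; first by rewrite sP ltnS prime_gt0 ?(pcharf_prime pL).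
have d0 : d != 0 by apply: contraTneq dP => ->; rewrite dvd0p -size_poly_eq0 sP.
have [y ry] : exists y, root (map_poly e d) y.
  by apply/closed_rootP; rewrite size_map_poly.
have rd x : root (map_poly e d) x -> root (map_poly e d) (x + e a).
  move=> rx; rewrite -(root_dvdp_artin_schreier PAS) ?root_map_frobenius //.
  by apply: root_dvdp rx; rewrite dvdp_map.
have := max_poly_roots _ (progression_roots _ ry rd) (uniq_progression y pK ea0).
rewrite map_poly_eq0 d0 size_mkseq size_map_poly => /(_ isT) p_lt_d.
by rewrite -dvdp_size_eqp // sP eqn_leq p_lt_d -sP dvdp_leq // -size_poly_eq0 sP.
Qed.

Lemma map_poly_dvdp_artin_schreier (L : finFieldType) (K : fieldType)
    (e : {rmorphism L -> K}) p (P : {poly L}) a z :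
    p \in [pchar L] -> P \is monic -> size P = p.+1 -> a != 0 ->
    P %| artin_schreier #|L| a -> root (map_poly e P) z ->
  map_poly e P = 'X^p + (- e a ^+ p.-1)%:P * 'X + (e a ^+ p.-1 * z - z ^+ p)%:P.
Proof.
move=> pL mP sP a0 PAS rz; have pK := rmorph_pchar e pL.
have rg y : root (map_poly e P) y -> root (map_poly e P) (y + e a).
  by move=> ry; rewrite -(root_dvdp_artin_schreier PAS ry) root_map_frobenius.
have ea0 : e a != 0 by rewrite fmorph_eq0.
by rewrite (map_poly_progression pK ea0 mP sP rz rg) prod_progression.
Qed.

Section OrbitPolynomials.
Variables (K : fieldType) (g : K).

(* At every [z] with [z ^+ Q = z + g], whatever Q is, [orbitU g n] and
   [orbitV g n] take the values of the n-th Carlitz iterate of 1 and of its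
   derivative. *)
Fixpoint orbitU n : {poly K} :=
  if n is n'.+1 then orbitU n' \Po ('X + g%:P) + 'X * orbitU n' else 1.

Fixpoint orbitV n : {poly K} :=
  if n is n'.+1 then orbitU n' + 'X * orbitV n' else 0.

Lemma deriv_orbitU n : (orbitU n.+1)^`() = orbitU n *+ n.+1.
Proof.
elim: n => [|n IH]; first by rewrite /= comp_polyC mulr1 derivD derivC derivX add0r.
rewrite [orbitU n.+2]/= derivD deriv_comp derivM IH deriv_XaddC mulr1 derivX mul1r.
rewrite raddfMn /=; ring.
Qed.

Lemma deriv_orbitV n : (orbitV n.+1)^`() = orbitV n *+ n.+1.
Proof.
elim: n => [|n IH]; first by rewrite /= mulr0 addr0 derivC.
by rewrite [orbitV n.+2]/= derivD derivM IH deriv_orbitU derivX mul1r /=; ring.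
Qed.

Lemma size_orbitU n : size (orbitU n) = n.+1.
Proof.
elim: n => [|n IH]; first by rewrite size_poly1.
rewrite /= addrC mulrC size_polyDl size_mulX -?size_poly_eq0 ?IH //.
by rewrite size_comp_poly2 ?size_XaddC ?IH.
Qed.

Lemma monic_orbitU n : orbitU n \is monic.
Proof.
elim: n => [|n IH]; first exact: monic1.
rewrite /= addrC mulrC monicE lead_coefDl ?lead_coefMX //.
by rewrite size_mulX -?size_poly_eq0 ?size_comp_poly2 ?size_XaddC ?size_orbitU.
Qed.

Lemma size_orbitV n : (size (orbitV n) <= n)%N.
Proof.
elim: n => [|n IH]; first by rewrite size_poly0.
rewrite /= (leq_trans (size_polyD _ _)) // geq_max size_orbitU leqnn /=.
by rewrite (leq_trans (size_polyMleq _ _)) // size_polyX add2n.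
Qed.

Section PrimeCharacteristic.
Variable p : nat.
Hypothesis pK : p \in [pchar K].

Let orbit_pchar_deriv (q : nat -> {poly K}) :
  (forall n, (q n.+1)^`() = q n *+ n.+1) -> (q p)^`() = 0.
Proof.
move=> dq; have p_gt0 := prime_gt0 (pcharf_prime pK).
by rewrite -(prednK p_gt0) dq prednK // (mulrn_pchar (R := {poly K})) ?pchar_poly.
Qed.

Lemma orbitU_pchar : orbitU p = 'X^p + ((orbitU p)`_0)%:P.
Proof.
rewrite {1}(deriv_eq0_pchar pK (orbit_pchar_deriv deriv_orbitU)) ?size_orbitU //.
have := monic_orbitU p; rewrite monicE /lead_coef size_orbitU => /eqP ->.
by rewrite mul1r.
Qed.

Lemma orbitV_pchar : orbitV p = ((orbitV p)`_0)%:P.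
Proof.
rewrite {1}(deriv_eq0_pchar pK (orbit_pchar_deriv deriv_orbitV)).
  by rewrite nth_default ?size_orbitV // mul0r add0r.
exact: leq_trans (size_orbitV p) _.
Qed.

End PrimeCharacteristic.
End OrbitPolynomials.

Lemma map_orbitU (K1 K2 : fieldType) (f : {rmorphism K1 -> K2}) (g : K1) n :
  map_poly f (orbitU g n) = orbitU (f g) n.
Proof.
elim: n => [|n IH]; first by rewrite rmorph1.
rewrite /= rmorphD rmorphM /= map_polyX map_comp_poly IH.
by rewrite rmorphD /= map_polyX map_polyC.
Qed.

Lemma map_orbitV (K1 K2 : fieldType) (f : {rmorphism K1 -> K2}) (g : K1) n :
  map_poly f (orbitV g n) = orbitV (f g) n.
Proof.
elim: n => [|n IH]; first by rewrite rmorph0.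
by rewrite /= rmorphD rmorphM /= map_polyX IH map_orbitU.
Qed.

Lemma deriv_carlitzT (L : finFieldType) (b : {poly L}) :
  (carlitzT b)^`() = b + 'X * b^`().
Proof.
rewrite /carlitzT derivD deriv_exp derivM derivX mul1r.
by rewrite -mulr_natr -polyC_natr natr_card_finField mulr0 add0r.
Qed.

Lemma map_carlitz (L : finFieldType) (K : fieldType) (e : {rmorphism L -> K})
    (N a : {poly L}) :
  map_poly e (carlitz N a) = \sum_(i < size (map_poly e N))
    ((map_poly e N)`_i)%:P * map_poly e (iter i (@carlitzT L) a).
Proof.
rewrite rmorph_sum size_map_poly; apply: eq_bigr => i _.
by rewrite rmorphM /= map_polyC coef_map.
Qed.

Section CarlitzAlongOrbit.
Variables (L : finFieldType) (K : fieldType) (e : {rmorphism L -> K}) (g : K).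
Hypothesis gL : g ^+ #|L| = g.

Let Lpchar := pchar_nat_card e.

Lemma horner_carlitz_iter i z : z ^+ #|L| = z + g ->
  (map_poly e (iter i (@carlitzT L) 1)).[z] = (orbitU g i).[z].
Proof.
elim: i z => [|i IH] z zL; first by rewrite rmorph1.
have zgL : (z + g) ^+ #|L| = z + g + g by rewrite exprDn_pchar // zL gL.
rewrite iterS /carlitzT rmorphD rmorphM rmorphXn /= map_polyX !hornerE.
rewrite (horner_exp_pchar Lpchar) => [|j]; last by rewrite coef_map -rmorphXn expf_card.
by rewrite zL (IH _ zgL) (IH _ zL) /= horner_comp !hornerE.
Qed.

Lemma horner_deriv_carlitz_iter i z : z ^+ #|L| = z + g ->
  (map_poly e (iter i (@carlitzT L) 1))^`().[z] = (orbitV g i).[z].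
Proof.
elim: i z => [|i IH] z zL; first by rewrite rmorph1 derivC horner0.
rewrite iterS deriv_map deriv_carlitzT rmorphD rmorphM /= map_polyX -deriv_map.
by rewrite !hornerE IH // horner_carlitz_iter.
Qed.

End CarlitzAlongOrbit.

Section CarlitzPredecessor.
Variables (L : finFieldType) (K : fieldType) (e : {rmorphism L -> K}).
Variables (p : nat) (P : {poly L}) (a : L) (z : K).
Hypotheses (pK : p \in [pchar K]) (zL : z ^+ #|L| = z + e a).
Hypothesis Pe :
  map_poly e P = 'X^p + (- e a ^+ p.-1)%:P * 'X + (e a ^+ p.-1 * z - z ^+ p)%:P.

Let U i := map_poly e (iter i (@carlitzT L) 1).
Let aL : e a ^+ #|L| = e a. Proof. by rewrite -rmorphXn expf_card. Qed.

Let map_carlitz_pred : map_poly e (carlitz (P - 1) 1) =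
  U p + (- e a ^+ p.-1)%:P * U 1%N + (e a ^+ p.-1 * z - z ^+ p - 1)%:P.
Proof.
have P1e : map_poly e (P - 1) =
    'X^p + (- e a ^+ p.-1)%:P * 'X + (e a ^+ p.-1 * z - z ^+ p - 1)%:P.
  by rewrite rmorphB /= rmorph1 Pe -addrA -polyCB.
have p_gt1 := prime_gt1 (pcharf_prime pK).
by rewrite map_carlitz P1e (sum_coef_trinomial _ _ p_gt1 U) /U rmorph1 mulr1.
Qed.

Lemma horner_carlitz_pred :
  (map_poly e (carlitz (P - 1) 1)).[z] = e ((orbitU a p)`_0 - 1 - a ^+ p.-1).
Proof.
rewrite map_carlitz_pred /U !(hornerD, hornerM, hornerC).
rewrite !(horner_carlitz_iter e aL _ zL).
rewrite {1}(orbitU_pchar _ pK) -map_orbitU coef_map /= comp_polyC mulr1.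
rewrite !(hornerD, hornerC, hornerX, hornerXn) !rmorphB rmorph1 rmorphXn.
by move: (e _) (e a ^+ p.-1) (z ^+ p) => u c zp; ring.
Qed.

Lemma horner_deriv_carlitz_pred :
  (map_poly e (carlitz (P - 1) 1))^`().[z] = e ((orbitV a p)`_0 - a ^+ p.-1).
Proof.
rewrite map_carlitz_pred /U !derivE !(hornerD, hornerM, hornerC).
rewrite !(horner_deriv_carlitz_iter e aL _ zL) {1}(orbitV_pchar _ pK) -map_orbitV.
by rewrite coef_map /= mulr0 !addr0 !hornerC mulr1 rmorphB rmorphXn.
Qed.

End CarlitzPredecessor.

Lemma cWieferich_artin_schreierP (L : finFieldType) p (P : {poly L}) (a : L) :
    p \in [pchar L] -> P \is monic -> size P = p.+1 -> a != 0 ->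
    P %| artin_schreier #|L| a ->
  cWieferich P <-> (orbitU a p)`_0 = 1 + a ^+ p.-1 /\ (orbitV a p)`_0 = a ^+ p.-1.
Proof.
move=> pL mP sP a0 PAS; have irrP := irreducible_dvdp_artin_schreier pL sP a0 PAS.
have [K [e _]] := countable_algebraic_closure L; have pK := rmorph_pchar e pL.
have [z rz] : exists z, root (map_poly e P) z.
  apply/closed_rootP; rewrite size_map_poly sP eqSS -lt0n.
  exact: prime_gt0 (pcharf_prime pL).
have zL := root_dvdp_artin_schreier PAS rz.
have Pe := map_poly_dvdp_artin_schreier pL mP sP a0 PAS rz.
have dPz : (map_poly e P)^`().[z] != 0.
  by rewrite Pe deriv_trinomial_pchar // hornerC oppr_eq0 expf_neq0 ?fmorph_eq0.
have -> : cWieferich P <-> P ^+ 2 %| carlitz (P - 1) 1 by split=> [[]|].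
rewrite (sqr_dvdp_double_root irrP rz _ dPz) /root.
rewrite (horner_carlitz_pred pK zL Pe) (horner_deriv_carlitz_pred pK zL Pe) !fmorph_eq0.
rewrite !subr_eq0 subr_eq addrC.
by split=> [/andP[/eqP-> /eqP->] | [-> ->]]; rewrite ?eqxx.
Qed.

Section AdditiveSubgroup.
Variables (F : finFieldType) (G : {set F}) (p : nat).
Hypotheses (HG : add_subgroup G) (cG : #|G| = p) (pF : p \in [pchar F]).

Lemma add_subgroup_mulrn a n : a \in G -> a *+ n \in G.
Proof.
case: HG => G0 GB aG; elim: n => [|n IH]; first by rewrite mulr0n.
by have := GB _ _ IH (GB _ _ G0 aG); rewrite sub0r opprK -mulrSr.
Qed.

Lemma add_subgroup_neq0 : exists2 a, a \in G & a != 0.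
Proof.
have [a /andP[aG a0]|G0] := pickP (fun x => (x \in G) && (x != 0)); first by exists a.
have : G \subset [set 0].
  by apply/subsetP => x xG; rewrite inE; have := G0 x; rewrite xG => /negbFE.
by move/subset_leq_card; rewrite cards1 cG leqNgt prime_gt1 ?(pcharf_prime pF).
Qed.

Lemma add_subgroup_mulrn_gen a : a \in G -> a != 0 ->
  forall b, b \in G -> exists2 j, (j < p)%N & b = a *+ j.
Proof.
move=> aG a0 b bG; set S := [set a *+ val j | j : 'I_p].
have inj_S : injective (fun j : 'I_p => a *+ val j).
  move=> i j /=; rewrite -[a *+ i]mulr_natl -[a *+ j]mulr_natl => /(mulIf a0).
  by move/(natr_inj_pchar pF (ltn_ord i) (ltn_ord j))/val_inj.
have SG : S = G.
  apply/eqP; rewrite eqEcard cG card_imset // card_ord leqnn andbT.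
  by apply/subsetP => _ /imsetP[j _ ->]; apply: add_subgroup_mulrn.
by move: bG; rewrite -SG => /imsetP[j _ ->]; exists (val j); rewrite ?ltn_ord.
Qed.

End AdditiveSubgroup.

Lemma root_expf_card_neq (F : finFieldType) (K : fieldType) (e : {rmorphism F -> K})
    (R : {poly F}) z :
  irreducible_poly R -> (2 < size R)%N -> root (map_poly e R) z -> z ^+ #|F| != z.
Proof.
move=> irrR sR rz; apply/eqP => zF.
have : (map_poly e ('X^#|F| - 'X)).[z] == 0.
  by rewrite rmorphB /= map_polyXn map_polyX !hornerE zF subrr.
rewrite finField_genPoly rmorph_prod horner_prod => /prodf_eq0[x _].
rewrite rmorphB /= map_polyX map_polyC !hornerE subr_eq0 => /eqP zx.
have Rx : root R x by move: rz; rewrite /root zx horner_map fmorph_eq0.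
have := irrR ('X - x%:P); rewrite size_XsubC dvdp_XsubCl => /(_ isT Rx)/eqp_size.
by rewrite size_XsubC => s2; rewrite -s2 ltnn in sR.
Qed.

Section GFixed.
Variables (F : finFieldType) (G : {set F}).

Lemma Gfixed_root_shift (K : fieldType) (e : {rmorphism F -> K}) (R : {poly F}) a y :
  Gfixed G R -> a \in G -> root (map_poly e R) y -> root (map_poly e R) (y + e a).
Proof.
move=> GR aG; rewrite /root -{1}(GR a aG) map_comp_poly horner_comp.
by rewrite rmorphD /= map_polyX map_polyC !hornerE.
Qed.

Lemma Gfixed_dvdp_artin_schreier p (R : {poly F}) :
    p \in [pchar F] -> add_subgroup G -> #|G| = p ->
    R \is monic -> irreducible_poly R -> Gfixed G R -> size R = p.+1 ->
  exists a, [/\ a \in G, a != 0 & R %| artin_schreier #|F| a].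
Proof.
move=> pF HG cG mR irrR GR sR; have [K [e _]] := countable_algebraic_closure F.
have pK := rmorph_pchar e pF; have p_gt1 := prime_gt1 (pcharf_prime pF).
have [a0 a0G a00] := add_subgroup_neq0 cG pF.
have [z rz] : exists z, root (map_poly e R) z.
  by apply/closed_rootP; rewrite size_map_poly sR eqSS -lt0n ltnW.
have ea0 : e a0 != 0 by rewrite fmorph_eq0.
have rg y := @Gfixed_root_shift K e R a0 y GR a0G.
have := root_map_frobenius rz; rewrite (root_map_poly_progression pK ea0 mR sR rz rg).
case/mapP => j _ zF; exists (a0 *+ j); split; first exact: add_subgroup_mulrn.
  have sR2 : (2 < size R)%N by rewrite sR ltnS.
  apply: contraTneq (root_expf_card_neq irrR sR2 rz) => a0j.
  by rewrite negbK zF mulr_natl -rmorphMn a0j rmorph0 addr0.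
apply: (irreducible_dvdp_root irrR rz).
by rewrite map_artin_schreier root_artin_schreier zF rmorphMn mulr_natl.
Qed.

End GFixed.

Theorem corollary5p4 (p k : nat) (F : finFieldType) (G : {set F}) :
  prime p -> #|F| = (p ^ k)%N ->
  add_subgroup G -> #|G| = p ->
  (exists W : {poly F}, [/\ Gfixed G W, size W = p.+1 & cWieferich W]) ->
  forall P : {poly F},
    P \is monic -> irreducible_poly P -> Gfixed G P -> size P = p.+1 ->
    exists r : nat, [/\ (0 < r)%N, (r < p)%N &
      forall (L : finFieldType) (f : {rmorphism F -> L}),
        #|L| = (#|F| ^ r)%N -> cWieferich (map_poly f P)].
Proof.
move=> pr cardF HG cG [W [GW sW wW]] P mP irrP GP sP.
have pF := card_finPcharP cardF pr; have [mW irrW _] := wW.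
have [aW [aWG aW0 WAS]] := Gfixed_dvdp_artin_schreier pF HG cG mW irrW GW sW.
have [aP [aPG aP0 PAS]] := Gfixed_dvdp_artin_schreier pF HG cG mP irrP GP sP.
have [UW VW] := (cWieferich_artin_schreierP pF mW sW aW0 WAS).1 wW.
have [r r_lt_p aWE] := add_subgroup_mulrn_gen HG cG pF aPG aP0 aWG.
have r_gt0 : (0 < r)%N by rewrite lt0n; apply: contraNneq aW0 => r0; rewrite aWE r0.
exists r; split=> // L f cardL.
have fPAS : map_poly f P %| artin_schreier #|L| (f aW).
  rewrite cardL aWE rmorphMn (dvdp_trans _ (dvdp_artin_schreier_exp _ _ _)) //.
  - by rewrite -map_artin_schreier dvdp_map.
  - exact: pchar_nat_card.
  - by rewrite -rmorphXn expf_card.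
have fW0 : f aW != 0 by rewrite fmorph_eq0.
have fE x : f (1 + x ^+ p.-1) = 1 + f x ^+ p.-1 by rewrite rmorphD rmorph1 rmorphXn.
apply/(cWieferich_artin_schreierP (rmorph_pchar f pF) _ _ fW0 fPAS).
- by rewrite map_monic.
- by rewrite size_map_poly.
rewrite -map_orbitU -map_orbitV !coef_map UW VW.
by split; [exact: fE | exact: rmorphXn].
Qed.
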